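(* Let $\alpha\in(0,\tfrac12]$ and $X_A,X_B>0$ satisfy $$\sqrt{\tfrac{8\alpha}{1-\alpha}}-\tfrac{2\alpha}{1-\alpha}\le\frac{X_B}{X_A}<\min\Big\{1,\sqrt{\tfrac{1-\alpha}{3\alpha}}\Big\},$$ and suppose the solution function $S$ has exactly one zero $\sigma^*$ in $(0,\infty)$. Then there exists a pre-commitment $p\in[0,X_B]$ by player $B$ to some battlefield $b\in\{1,2\}$ such that $u_B(p)>\pi_B(\sigma^* )$.
   Context: Two-battlefield asymmetric setting: valuations $v_{A,1}=\alpha$, $v_{A,2}=1-\alpha$, $v_{B,1}=1-\alpha$, $v_{B,2}=\alpha$, budgets $X_A,X_B>0$. Define, for $x,y\ge0$, $L(x,y)=\frac{x}{2y}$ if $0\le x\le y$, $y>0$; $L(x,y)=1-\frac{y}{2x}$ if $x>y\ge0$; $L(0,0)=\tfrac12$. Let $c=\frac{(1-\alpha)^2}{\alpha}+\frac{\alpha^2}{1-\alpha}$, $r=X_A/X_B$, and $S:(0,\infty)\to\mathbb R$: $S(\sigma)=\sigma^2(c\sigma-r)$ on $(0,\frac{\alpha}{1-\alpha})$; $S(\sigma)=\frac{\alpha^2}{1-\alpha}(\sigma^3-r)+\alpha\sigma(1-r\sigma)$ on $[\frac{\alpha}{1-\alpha},\frac{1-\alpha}{\alpha})$; $S(\sigma)=\sigma-rc$ on $[\frac{1-\alpha}{\alpha},\infty)$. Player $B$'s equilibrium payoff for a zero $\sigma$: $\pi_B(\sigma)=1-\frac{\sigma}{2}$ if $\sigma\in(0,\frac{\alpha}{1-\alpha})$;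 $\pi_B(\sigma)=1-\alpha-\frac{\alpha\sigma}{2}+\frac{\alpha^2}{2\sigma(1-\alpha)}$ if $\sigma\in[\frac{\alpha}{1-\alpha},\frac{1-\alpha}{\alpha})$; $\pi_B(\sigma)=\frac{c}{2\sigma}$ if $\sigma\ge\frac{1-\alpha}{\alpha}$. Pre-commitment: $B$ places $p\in[0,X_B]$ on one battlefield $b\in\{1,2\}$; $u_A^{M}(p)=v_{A,b}+(1-v_{A,b})L(X_A-p,X_B-p)$ (for $p\le X_A$), $u_A^{W}(p)=(1-v_{A,b})L(X_A,X_B-p)$; $A$'s response is $\mathtt A_b(p)=\mathtt M$ if $p\le X_A$ and $u_A^M(p)>u_A^W(p)$, else $\mathtt A_b(p)=\mathtt W$ (ties go to withdrawing). $B$'s payoff is $u_B(p)=(1-v_{B,b})L(X_B-p,X_A-p)$ if $\mathtt A_b(p)=\mathtt M$ and $u_B(p)=v_{B,b}+(1-v_{B,b})L(X_B-p,X_A)$ if $\mathtt A_b(p)=\mathtt W$. *)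

From Stdlib Require Import Reals Lra.
Open Scope R_scope.

Definition L (x y : R) : R :=
  if Rle_lt_dec x y then
    (if Rlt_dec 0 y then x / (2 * y) else 1 / 2)   (* x <= y: y > 0, or x = y = 0 *)
  else 1 - y / (2 * x).

(* battlefields are 1 and 2, encoded as nat; any b other than 1 is battlefield 2 *)
Definition vA (alpha : R) (b : nat) : R := if Nat.eqb b 1 then alpha else 1 - alpha.
Definition vB (alpha : R) (b : nat) : R := if Nat.eqb b 1 then 1 - alpha else alpha.

Definition cconst (alpha : R) : R := (1 - alpha) ^ 2 / alpha + alpha ^ 2 / (1 - alpha).

Definition S (alpha XA XB sigma : R) : R :=
  let c := cconst alpha in
  let r := XA / XB in
  if Rlt_dec sigma (alpha / (1 - alpha)) then sigma ^ 2 * (c * sigma - r)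
  else if Rlt_dec sigma ((1 - alpha) / alpha) then
    alpha ^ 2 / (1 - alpha) * (sigma ^ 3 - r) + alpha * sigma * (1 - r * sigma)
  else sigma - r * c.

Definition piB (alpha sigma : R) : R :=
  if Rlt_dec sigma (alpha / (1 - alpha)) then 1 - sigma / 2
  else if Rlt_dec sigma ((1 - alpha) / alpha) then
    1 - alpha - alpha * sigma / 2 + alpha ^ 2 / (2 * sigma * (1 - alpha))
  else cconst alpha / (2 * sigma).

(* A's utilities after B pre-commits p to battlefield b *)
Definition uAM (alpha XA XB : R) (b : nat) (p : R) : R :=
  vA alpha b + (1 - vA alpha b) * L (XA - p) (XB - p).
Definition uAW (alpha XA XB : R) (b : nat) (p : R) : R :=
  (1 - vA alpha b) * L XA (XB - p).

(* A's response A_b(p) = M iff p <= XA and uAM > uAW (ties -> W); uB inlines it. *)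
Definition uB (alpha XA XB : R) (b : nat) (p : R) : R :=
  if Rle_dec p XA then
    if Rgt_dec (uAM alpha XA XB b p) (uAW alpha XA XB b p)
    then (1 - vB alpha b) * L (XB - p) (XA - p)
    else vB alpha b + (1 - vB alpha b) * L (XB - p) XA
  else vB alpha b + (1 - vB alpha b) * L (XB - p) XA.

(* Write a = alpha/(1-alpha) and t = X_B/X_A, so that alpha = a/(1+a) and the three regimes of S
   are split at a and 1/a.  If B commits p = X_B/2 + a X_A to battlefield 1, A's gain from
   withdrawing rather than matching is proportional to (t + 2a)^2 - 8a >= 0, so A withdraws and B
   secures at least v_{B,1} = 1/(1+a); the upper bound on t guarantees p <= X_B.  On the other
   hand the unique zero of S gives B strictly less: either the zero of the last affine piece lies
   beyond 1/a, and then pi_B = t/2 < 1/2, or it does not, and then the middle cubic changes sign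
   on [1, 1/a], so the zero is at least 1 and pi_B < 1/(1+a) there as well. *)
From Stdlib Require Import Reals Lra Psatz.
Open Scope R_scope.

Lemma L_gt x y : y < x -> L x y = 1 - y / (2 * x).
Proof. intros. unfold L. destruct (Rle_lt_dec x y); [lra | reflexivity]. Qed.

Lemma L_nonneg x y : 0 <= x -> 0 <= y -> 0 <= L x y.
Proof.
  intros Hx Hy. destruct (Rle_lt_dec x y) as [Hle | Hlt].
  - unfold L. destruct (Rle_lt_dec x y); [|lra]. destruct (Rlt_dec 0 y); [|lra].
    unfold Rdiv. apply Rle_mult_inv_pos; lra.
  - rewrite L_gt by exact Hlt.
    replace (1 - y / (2 * x)) with ((2 * x - y) / (2 * x)) by (field; lra).
    unfold Rdiv. apply Rle_mult_inv_pos; lra.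
Qed.

Lemma uB_withdraw alpha XA XB b p :
  uAM alpha XA XB b p <= uAW alpha XA XB b p ->
  uB alpha XA XB b p = vB alpha b + (1 - vB alpha b) * L (XB - p) XA.
Proof.
  intros Hw. unfold uB.
  destruct (Rle_dec p XA); [destruct (Rgt_dec _ _)|]; [lra | reflexivity | reflexivity].
Qed.

Lemma vB_le_uB_withdraw alpha XA XB b p :
  0 <= alpha <= 1 -> 0 < XA -> p <= XB ->
  uAM alpha XA XB b p <= uAW alpha XA XB b p ->
  vB alpha b <= uB alpha XA XB b p.
Proof.
  intros Hal HXA Hp Hw. rewrite uB_withdraw by exact Hw.
  assert (0 <= 1 - vB alpha b) by (unfold vB; destruct (Nat.eqb b 1); lra).
  assert (0 <= L (XB - p) XA) by (apply L_nonneg; lra).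
  nra.
Qed.

Lemma uAW_sub_uAM_1 alpha XA XB p : 0 <= p <= XB -> XB < XA ->
  uAW alpha XA XB 1 p - uAM alpha XA XB 1 p =
  ((1 - alpha) * (XB - p) * p - 2 * alpha * XA * (XA - p)) / (2 * XA * (XA - p)).
Proof.
  intros Hp HX. unfold uAW, uAM, vA. simpl.
  rewrite (L_gt XA) by lra. rewrite (L_gt (XA - p)) by lra.
  field. lra.
Qed.

Lemma le_sqr_of_sqrt_le x y : 0 <= x -> sqrt x <= y -> x <= y ^ 2.
Proof. intros Hx H. pose proof (sqrt_sqrt x Hx). pose proof (sqrt_pos x). nra. Qed.

Lemma sqr_lt_of_lt_sqrt x y : 0 <= x -> 0 <= y -> x < sqrt y -> x ^ 2 < y.
Proof. intros Hx Hy H. pose proof (sqrt_sqrt y Hy). nra. Qed.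

Lemma twice_le_of_bounds a t : 0 < a <= 1 -> 0 < t < 1 ->
  8 * a <= (t + 2 * a) ^ 2 -> 3 * a * t ^ 2 < 1 -> 2 * a <= t.
Proof.
  intros Ha Ht Hlo Hhi. destruct (Rle_lt_dec (2 * a) t) as [|Hlt]; [assumption | exfalso].
  assert (a > 1 / 2) by nra.
  assert (t > 4 / 5) by nra.
  nra.
Qed.

Section Reparametrized.

Variables a t XA : R.
Hypotheses (a_pos : 0 < a) (t_pos : 0 < t) (XA_pos : 0 < XA).

Let alpha := a / (1 + a).
Let sigma_high := (1 + a ^ 3) / (t * a * (1 + a)).

Lemma lower_threshold_reparam : alpha / (1 - alpha) = a.
Proof. unfold alpha. field. lra. Qed.

Lemma upper_threshold_reparam : (1 - alpha) / alpha = 1 / a.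
Proof. unfold alpha. field. lra. Qed.

Lemma cconst_reparam : cconst alpha = (1 + a ^ 3) / (a * (1 + a)).
Proof. unfold cconst, alpha. field. lra. Qed.

Lemma S_reparam_mid z : a <= z < 1 / a ->
  S alpha XA (t * XA) z = alpha * (a * z ^ 3 - z ^ 2 / t + z - a / t).
Proof.
  intros Hz. unfold S; cbv zeta.
  rewrite lower_threshold_reparam, upper_threshold_reparam.
  destruct (Rlt_dec z a); [lra|]. destruct (Rlt_dec z (1 / a)); [|lra].
  unfold alpha. field. lra.
Qed.

Lemma piB_reparam_mid z : a <= z < 1 / a ->
  piB alpha z = (1 - a * z / 2 + a ^ 2 / (2 * z)) / (1 + a).
Proof.
  intros Hz. unfold piB. rewrite lower_threshold_reparam, upper_threshold_reparam.
  destruct (Rlt_dec z a); [lra|]. destruct (Rlt_dec z (1 / a)); [|lra].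
  unfold alpha. field. lra.
Qed.

Lemma alpha_reparam_bounds : 0 < alpha < 1.
Proof.
  unfold alpha. split; [apply Rdiv_lt_0_compat; lra|].
  replace (a / (1 + a)) with (1 - 1 / (1 + a)) by (field; lra).
  assert (0 < 1 / (1 + a)) by (apply Rdiv_lt_0_compat; lra). lra.
Qed.

Hypotheses (a_le_1 : a <= 1) (t_lt_1 : t < 1).

Lemma a_le_inv_a : a <= 1 / a.
Proof. apply (Rmult_le_reg_r a); [lra|]. field_simplify; nra. Qed.

Lemma S_reparam_high z : 1 / a <= z -> S alpha XA (t * XA) z = z - sigma_high.
Proof.
  intros Hz. pose proof a_le_inv_a. unfold S; cbv zeta.
  rewrite lower_threshold_reparam, upper_threshold_reparam, cconst_reparam.
  destruct (Rlt_dec z a); [lra|]. destruct (Rlt_dec z (1 / a)); [lra|].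
  unfold sigma_high. field. lra.
Qed.

Lemma piB_reparam_high z : 1 / a <= z ->
  piB alpha z = (1 + a ^ 3) / (a * (1 + a)) / (2 * z).
Proof.
  intros Hz. pose proof a_le_inv_a. unfold piB. rewrite lower_threshold_reparam, upper_threshold_reparam.
  rewrite cconst_reparam.
  destruct (Rlt_dec z a); [lra|]. destruct (Rlt_dec z (1 / a)); [lra | reflexivity].
Qed.

Lemma mid_zero_exists : sigma_high < 1 / a ->
  exists z, 1 <= z < 1 / a /\ S alpha XA (t * XA) z = 0.
Proof.
  intros Hhigh.
  set (f z := a * z ^ 3 - z ^ 2 / t + z - a / t).
  assert (Hbound : 1 + a ^ 3 < t * (1 + a)).
  { unfold sigma_high in Hhigh.
    apply Rmult_lt_compat_r with (r := t * a * (1 + a)) in Hhigh; [|nra].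
    field_simplify in Hhigh; lra. }
  assert (Ha1 : 1 < 1 / a).
  { apply (Rmult_lt_reg_r a); [lra|]. field_simplify; [nra | lra]. }
  assert (Hf1 : f 1 < 0).
  { unfold f. replace (a * 1 ^ 3 - 1 ^ 2 / t + 1 - a / t) with ((1 + a) * (t - 1) / t)
      by (field; lra).
    apply Rdiv_neg_pos; nra. }
  assert (Hfa : 0 < f (1 / a)).
  { unfold f. replace (a * (1 / a) ^ 3 - (1 / a) ^ 2 / t + 1 / a - a / t)
      with ((t * (1 + a) - (1 + a ^ 3)) / (t * a ^ 2)) by (field; lra).
    apply Rdiv_lt_0_compat; nra. }
  assert (Hcont : continuity f) by (unfold f, Rdiv; reg).
  destruct (IVT f 1 (1 / a) Hcont Ha1 Hf1 Hfa) as [z [[Hz1 Hz2] Hfz]].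
  assert (Hz : z < 1 / a) by (destruct Hz2 as [ | -> ]; lra).
  exists z. split; [lra|].
  rewrite S_reparam_mid by lra. fold (f z). rewrite Hfz. ring.
Qed.

Lemma piB_lt_of_unique_zero s :
  (forall z, 0 < z -> S alpha XA (t * XA) z = 0 -> z = s) ->
  piB alpha s < 1 / (1 + a).
Proof.
  intros Hu. pose proof a_le_inv_a.
  assert (Hhalf : 1 / 2 <= 1 / (1 + a)).
  { apply (Rmult_le_reg_r (2 * (1 + a))); [lra|]. field_simplify; lra. }
  destruct (Rle_lt_dec (1 / a) sigma_high) as [Hhigh | Hhigh].
  - assert (Hs : sigma_high = s).
    { apply Hu; [lra|]. rewrite S_reparam_high by lra. ring. }
    subst s. rewrite piB_reparam_high by lra.
    replace ((1 + a ^ 3) / (a * (1 + a)) / (2 * sigma_high)) with (t / 2)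
      by (unfold sigma_high; field; repeat split; nra).
    lra.
  - destruct (mid_zero_exists Hhigh) as [z [Hz HSz]].
    assert (Hzs : z = s) by (apply Hu; [lra | exact HSz]). subst s.
    rewrite piB_reparam_mid by lra.
    assert (Ha1 : a < 1) by (assert (a * (1 / a) = 1) by (field; lra); nra).
    replace ((1 - a * z / 2 + a ^ 2 / (2 * z)) / (1 + a))
      with (1 / (1 + a) - a * (z * z - a) / (2 * z * (1 + a))) by (field; lra).
    assert (0 < a * (z * z - a) / (2 * z * (1 + a))).
    { assert (1 <= z * z) by nra.
      apply Rdiv_lt_0_compat; apply Rmult_lt_0_compat; lra. }
    lra.
Qed.

Lemma uB_commitment : 2 * a <= t -> 8 * a <= (t + 2 * a) ^ 2 ->
  1 / (1 + a) <= uB alpha XA (t * XA) 1 (XA * (t / 2 + a)).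
Proof.
  intros H2a Hlo.
  replace (1 / (1 + a)) with (vB alpha 1) by (unfold vB, alpha; simpl; field; lra).
  pose proof alpha_reparam_bounds.
  assert (Hx : 0 < t / 2 + a <= t) by lra.
  assert (0 < XA - XA * (t / 2 + a)) by nra.
  apply vB_le_uB_withdraw; [lra | lra | nra |].
  - assert (0 <= uAW alpha XA (t * XA) 1 (XA * (t / 2 + a))
              - uAM alpha XA (t * XA) 1 (XA * (t / 2 + a))); [|lra].
    rewrite uAW_sub_uAM_1 by nra.
    unfold Rdiv at 1. apply Rle_mult_inv_pos; [|nra].
    replace ((1 - alpha) * (t * XA - XA * (t / 2 + a)) * (XA * (t / 2 + a))
             - 2 * alpha * XA * (XA - XA * (t / 2 + a)))
      with (XA ^ 2 * ((t + 2 * a) ^ 2 - 8 * a) / (4 * (1 + a))) by (unfold alpha; field; lra).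
    unfold Rdiv. apply Rle_mult_inv_pos; nra.
Qed.

Lemma commitment_beats_unique_zero s :
  8 * a <= (t + 2 * a) ^ 2 -> 3 * a * t ^ 2 < 1 ->
  (forall z, 0 < z -> S alpha XA (t * XA) z = 0 -> z = s) ->
  exists (b : nat) (p : R),
    (b = 1%nat \/ b = 2%nat) /\ 0 <= p <= t * XA /\ uB alpha XA (t * XA) b p > piB alpha s.
Proof.
  intros Hlo Hhi Hu.
  assert (H2a : 2 * a <= t) by (apply twice_le_of_bounds; lra).
  exists 1%nat, (XA * (t / 2 + a)). split; [left; reflexivity|]. split; [split; nra|].
  pose proof (uB_commitment H2a Hlo).
  pose proof (piB_lt_of_unique_zero s Hu).
  lra.
Qed.

End Reparametrized.

Theorem theorem3 (alpha XA XB : R) :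
  0 < alpha <= 1 / 2 -> 0 < XA -> 0 < XB ->
  sqrt (8 * alpha / (1 - alpha)) - 2 * alpha / (1 - alpha) <= XB / XA ->
  XB / XA < Rmin 1 (sqrt ((1 - alpha) / (3 * alpha))) ->
  forall sigma_star : R,
    0 < sigma_star -> S alpha XA XB sigma_star = 0 ->
    (forall s : R, 0 < s -> S alpha XA XB s = 0 -> s = sigma_star) ->
  exists (b : nat) (p : R),
    (b = 1%nat \/ b = 2%nat) /\ 0 <= p <= XB /\
    uB alpha XA XB b p > piB alpha sigma_star.
Proof.
  intros Hal HXA HXB Hlo Hhi s _ _ Hu.
  pose proof (Rlt_le_trans _ _ _ Hhi (Rmin_l _ _)) as Ht1.
  pose proof (Rlt_le_trans _ _ _ Hhi (Rmin_r _ _)) as Ht2.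
  set (a := alpha / (1 - alpha)) in *.
  set (t := XB / XA) in *.
  assert (Ha : 0 < a <= 1).
  { unfold a. split; [apply Rdiv_lt_0_compat; lra|].
    apply (Rmult_le_reg_r (1 - alpha)); [lra|]. field_simplify; lra. }
  assert (Ht : 0 < t) by (apply Rdiv_lt_0_compat; lra).
  assert (Hlo2 : 8 * a <= (t + 2 * a) ^ 2).
  { replace (8 * alpha / (1 - alpha)) with (8 * a) in Hlo by (unfold a; field; lra).
    replace (2 * alpha / (1 - alpha)) with (2 * a) in Hlo by (unfold a; field; lra).
    apply le_sqr_of_sqrt_le; lra. }
  assert (Hhi2 : 3 * a * t ^ 2 < 1).
  { replace ((1 - alpha) / (3 * alpha)) with (1 / (3 * a)) in Ht2 by (unfold a; field; lra).
    apply sqr_lt_of_lt_sqrt in Ht2; [| lra | apply Rlt_le, Rdiv_lt_0_compat; lra].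
    apply (Rmult_lt_compat_l (3 * a)) in Ht2; [|lra].
    field_simplify in Ht2; lra. }
  assert (Halpha : alpha = a / (1 + a)) by (unfold a; field; lra).
  assert (HXB' : XB = t * XA) by (unfold t; field; lra).
  clearbody a t. subst alpha XB.
  exact (commitment_beats_unique_zero a t XA ltac:(lra) Ht HXA ltac:(lra) Ht1 s Hlo2 Hhi2 Hu).
Qed.
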